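(* Let $n$ be a positive integer and $v$ an odd positive integer, let $q=v^{1/n}$, assume $q\ge3$, and put $m=\left\lfloor\frac{q-1}{2}\right\rfloor$. Then there exists a $\left(q^n,\ m^nq^n,\ m^n(q^n-2^n),\ q^n\right)$ placement delivery array, which realizes a coded caching scheme with $K=q^n$ users, memory ratio $\frac{M}{N}=1-\left(\frac{2}{q}\right)^n$, subpacketization $m^nq^n$, and transmission load $R=m^{-n}$.
   Context: A $(K,F,Z,S)$ placement delivery array (PDA) is an $F\times K$ array $\mathbf{P}=(p_{j,k})$ with entries from $\{*\}\cup\{1,\dots,S\}$ such that: (C1) each column contains exactly $Z$ stars; (C2) each integer of $\{1,\dots,S\}$ occurs at least once; (C3) for any two distinct entries $p_{j_1,k_1}=p_{j_2,k_2}=s$ (an integer) we have $j_1\neq j_2$, $k_1\neq k_2$, and $p_{j_1,k_2}=p_{j_2,k_1}=*$. A $(K,M,N)$ coded caching system consists of a server storing $N$ equal-size files and $K$ users each with a cache of size $M$ files, connected by an error-free shared broadcast link. An $F$-division scheme splits each file into $F$ equal-size packets placed (uncoded) in caches independently of demands; in delivery each user requests one file and the server broadcasts XORs of packets so every user decodes its request. The load $R$ is the worst-case normalized broadcast size; $M/N$ is the memory ratio. A $(K,F,Z,S)$ PDA realizes an $F$-division scheme with $M/N=Z/F$ and $R=S/F$. *)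

From HB Require Import structures.
From mathcomp Require Import all_boot all_order all_algebra.
From mathcomp Require Import all_classical all_reals all_analysis.
Set Implicit Arguments. Unset Strict Implicit. Unset Printing Implicit Defensive.
Import Order.TTheory GRing.Theory Num.Theory.

(* A (K,F,Z,S) placement delivery array: an F x K array whose entries are
   either a star (None) or an integer s with 1 <= s <= S (Some s).
   Rows are indexed by 'I_F, columns by 'I_K. *)
Definition is_PDA (K F Z S : nat) (P : 'I_F -> 'I_K -> option nat) : Prop :=
  (forall j k s, P j k = Some s -> (1 <= s <= S)%N) /\
  (forall k : 'I_K, #|[set j : 'I_F | P j k == None]| = Z) /\
  (forall s, (1 <= s <= S)%N -> exists j k, P j k = Some s) /\
  (forall (j1 j2 : 'I_F) (k1 k2 : 'I_K) (s : nat),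
      (j1, k1) <> (j2, k2) -> P j1 k1 = Some s -> P j2 k2 = Some s ->
      [/\ j1 <> j2, k1 <> k2, P j1 k2 = None & P j2 k1 = None]).
Arguments is_PDA : clear implicits.

From HB Require Import structures.
From mathcomp Require Import all_boot all_order all_algebra.
From mathcomp Require Import all_classical all_reals all_analysis.
From mathcomp Require Import ring lra zify.
Import Order.TTheory GRing.Theory Num.Theory.
Set Implicit Arguments. Unset Strict Implicit. Unset Printing Implicit Defensive.
Local Open Scope ring_scope.

(* Rows are pairs (a, j) with a in [0, m)^n and j in Z/vZ, columns are k in Z/vZ.
   A sign vector e gives the offset o(a, e) = sum_i +-(a_i + 1) (2m+1)^i; cell
   ((a, j), k) is filled iff k = j + o(a, e) for some e, and then holds 2j - k.
   The column count and the PDA exclusion conditions all reduce to one fact: a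
   base-(2m+1) expansion with digits of absolute value at most 2m that vanishes
   modulo v >= (2m+1)^n has only zero digits; v odd makes 2 invertible mod v.
   The real hypotheses only serve to give q^n = v and 2m + 1 <= q. *)

Definition is_PDA_on (T C : finType) (Z S : nat) (P : T -> C -> option nat) : Prop :=
  (forall t c s, P t c = Some s -> (1 <= s <= S)%N) /\
  (forall c : C, #|[set t : T | P t c == None]| = Z) /\
  (forall s, (1 <= s <= S)%N -> exists t c, P t c = Some s) /\
  (forall (t1 t2 : T) (c1 c2 : C) (s : nat),
      (t1, c1) <> (t2, c2) -> P t1 c1 = Some s -> P t2 c2 = Some s ->
      [/\ t1 <> t2, c1 <> c2, P t1 c2 = None & P t2 c1 = None]).

Lemma is_PDA_on_bij (T T' C C' : finType) (Z S : nat) (P : T -> C -> option nat)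
    (f : T' -> T) (g : C' -> C) :
  bijective f -> bijective g -> is_PDA_on Z S P ->
  is_PDA_on Z S (fun t c => P (f t) (g c)).
Proof.
move=> [f' fK f'K] [g' gK g'K] [range [stars [symbols distinct]]].
split; last split; last split.
- by move=> t c s; apply: range.
- move=> c; rewrite -(stars (g c)) -(on_card_preimset (f := f)).
    by apply: eq_card => t; rewrite !inE.
  by exists f' => t _.
- move=> s /symbols[t [c Ptc]]; exists (f' t), (g' c); by rewrite f'K g'K.
- move=> t1 t2 c1 c2 s ne P1 P2.
  have ne' : (f t1, g c1) <> (f t2, g c2).
    by case=> /(can_inj fK) e1 /(can_inj gK) e2; apply: ne; rewrite e1 e2.
  have [nt nc P12 P21] := distinct _ _ _ _ _ ne' P1 P2.
  by split=> // e; [apply: nt | apply: nc]; rewrite e.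
Qed.

Definition radix_sum (p : int) n (z : 'I_n -> int) : int := \sum_(i < n) z i * p ^+ i.

Lemma radix_sumS p n (z : 'I_n.+1 -> int) :
  radix_sum p z = z ord0 + p * radix_sum p (fun i => z (lift ord0 i)).
Proof.
rewrite /radix_sum big_ord_recl expr0 mulr1 big_distrr; congr (_ + _).
by apply: eq_bigr => i _; rewrite exprS mulrCA.
Qed.

Lemma radix_sum_bound p n (z : 'I_n -> int) :
  (forall i, `|z i| <= p - 1) -> `|radix_sum p z| <= p ^+ n - 1.
Proof.
elim: n z => [|n IH] z zb; first by rewrite /radix_sum big_ord0 expr0 subrr.
have := IH _ (fun i => zb (lift ord0 i)); have := zb ord0.
rewrite radix_sumS exprS; move: (radix_sum _ _) (z ord0) (p ^+ n) => y z0 P.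
nia.
Qed.

Lemma radix_sum_eq0 p n (z : 'I_n -> int) :
  (forall i, `|z i| <= p - 1) -> radix_sum p z = 0 -> forall i, z i = 0.
Proof.
elim: n z => [|n IH] z zb; first by move=> _ [].
rewrite radix_sumS => sum0.
have tail0 : radix_sum p (fun i => z (lift ord0 i)) = 0.
  by have := zb ord0; move: sum0; move: (radix_sum _ _) (z ord0) => y z0; nia.
have z0 : z ord0 = 0 by rewrite tail0 mulr0 addr0 in sum0.
move=> i; case: (unliftP ord0 i) => [j ->|-> //].
exact: IH (fun j => zb (lift ord0 j)) tail0 j.
Qed.

Lemma Zp_intr_eq0 v (x : int) : (1 < v)%N -> `|x| < v%:Z -> (x%:~R : 'Z_v) = 0 -> x = 0.
Proof.
move=> v_gt1 x_lt_v.
have natr_eq0 k : (k < v)%N -> (k%:R : 'Z_v) = 0 -> k = 0%N.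
  by move=> k_lt_v /(congr1 val); rewrite [LHS]val_Zp_nat // modn_small.
case: x x_lt_v => k k_lt_v.
  have {}k_lt_v : (k < v)%N by lia.
  by move/(natr_eq0 _ k_lt_v) ->.
have {}k_lt_v : (k.+1 < v)%N by rewrite NegzE in k_lt_v; lia.
by rewrite NegzE rmorphN => /eqP; rewrite oppr_eq0 => /eqP/(natr_eq0 _ k_lt_v).
Qed.

Lemma Zp_mulrn2_inj v : (1 < v)%N -> odd v -> injective (fun x : 'Z_v => x *+ 2).
Proof.
move=> v_gt1 v_odd x y /=; rewrite -[x *+ 2]mulr_natr -[y *+ 2]mulr_natr.
by apply: mulIr; rewrite (unitZpE 2 v_gt1) coprimen2.
Qed.

Definition signed_digit (x : nat) (b : bool) : int := if b then x.+1%:Z else - x.+1%:Z.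

Section OffsetArray.
Variables (n m v : nat).
Hypotheses (v_gt1 : (1 < v)%N) (v_odd : odd v) (radix_le_v : ((2 * m + 1) ^ n <= v)%N).

Local Notation vec := {ffun 'I_n -> 'I_m}.
Local Notation signs := {ffun 'I_n -> bool}.
Local Notation p := (2 * m + 1)%:Z.

Definition offset (a : vec) (e : signs) : 'Z_v :=
  (radix_sum p (fun i => signed_digit (a i) (e i)))%:~R.

Lemma offset_double a1 e1 d a2 e2 :
  offset a2 e2 *+ 2 = offset a1 e1 + offset a1 d -> [/\ a2 = a1, e2 = e1 & d = e1].
Proof.
move=> double.
(* Digitwise, 2 z = 2 x2 - x1(e1) - x1(d) and |z| <= 2m. *)
pose z i := signed_digit (a2 i) (e2 i) -
  (if e1 i == d i then signed_digit (a1 i) (e1 i) else 0).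
have z_bound i : `|z i| <= p - 1.
  rewrite /z /signed_digit; have := ltn_ord (a1 i); have := ltn_ord (a2 i).
  by case: (e1 i) (e2 i) (d i) => [] [] [] /=; lia.
have z_sum : radix_sum p z *+ 2 = radix_sum p (fun i => signed_digit (a2 i) (e2 i)) *+ 2
    - radix_sum p (fun i => signed_digit (a1 i) (e1 i))
    - radix_sum p (fun i => signed_digit (a1 i) (d i)).
  rewrite /radix_sum -!sumrMnl -!sumrB; apply: eq_bigr => i _.
  by rewrite /z /signed_digit; case: (e1 i) (d i) => [] [] /=; ring.
have z0 : radix_sum p z = 0.
  apply: (Zp_intr_eq0 v_gt1).
    have := radix_sum_bound z_bound.
    have : p ^+ n <= v%:Z by rewrite -natz -natrX natz lez_nat.
    lia.
  apply: (Zp_mulrn2_inj v_gt1 v_odd); rewrite /= mul0rn -rmorphMn z_sum !rmorphB /=.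
  rewrite rmorphMn -/(offset a2 e2) -/(offset a1 e1) -/(offset a1 d) double.
  by rewrite addrAC addrK subrr.
have digit i : [/\ a2 i = a1 i, e2 i = e1 i & d i = e1 i].
  have := radix_sum_eq0 z_bound z0 i; rewrite /z /signed_digit.
  case: (e1 i) (e2 i) (d i) => [] [] [] /= digit0; split=> //;
    first [apply: val_inj => /=; lia | exfalso; lia].
by split; apply/ffunP => i; case: (digit i).
Qed.

Lemma offset_inj a1 e1 a2 e2 : offset a1 e1 = offset a2 e2 -> a1 = a2 /\ e1 = e2.
Proof.
move=> same; have [] := @offset_double a2 e2 e2 a1 e1; first by rewrite same mulr2n.
by move=> -> ->.
Qed.

Definition offset_array (t : vec * 'Z_v) (k : 'Z_v) : option nat :=
  if [exists e, k == t.2 + offset t.1 e] then Some (nat_of_ord (t.2 *+ 2 - k)).+1 else None.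

Lemma offset_array_some a j k s : offset_array (a, j) k = Some s ->
  (exists e, k = j + offset a e) /\ s = (nat_of_ord (j *+ 2 - k)).+1.
Proof.
by rewrite /offset_array; case: existsP => // -[e /eqP filled] [<-]; split=> //; exists e.
Qed.

Lemma offset_array_filled a j e :
  offset_array (a, j) (j + offset a e) = Some (nat_of_ord (j *+ 2 - (j + offset a e))).+1.
Proof. by rewrite /offset_array; case: existsP => // -[]; exists e. Qed.

Lemma offset_array_range t k s : offset_array t k = Some s -> (1 <= s <= v)%N.
Proof.
case: t => a j /offset_array_some[_ ->]; rewrite ltn0Sn -[v in (_ <= v)%N](Zp_cast v_gt1).
exact: ltn_ord.
Qed.

Lemma card_offset_array_stars k :
  #|[set t | offset_array t k == None]| = (m ^ n * (v - 2 ^ n))%N.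
Proof.
pose filled (ae : vec * signs) : vec * 'Z_v := (ae.1, k - offset ae.1 ae.2).
have filledE : [set t | offset_array t k != None] = filled @: [set: vec * signs]%SET.
  apply/setP => -[a j]; rewrite inE /offset_array /=; apply/idP/imsetP.
    case: existsP => // -[e /eqP k_eq] _; exists (a, e); first by rewrite inE.
    by rewrite /filled k_eq addrK.
  by case=> -[a' e] _ [-> ->]; case: existsP => // -[]; exists e; rewrite subrK.
have filled_inj : injective filled.
  move=> [a1 e1] [a2 e2] same_cell.
  have a_eq : a1 = a2 := congr1 fst same_cell.
  have o_eq : k - offset a1 e1 = k - offset a2 e2 := congr1 snd same_cell.
  by have [_ ->] := offset_inj (oppr_inj (addrI _ o_eq)); rewrite a_eq.
have starsE : [set t | offset_array t k == None] = ~: [set t | offset_array t k != None].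
  by apply/setP => t; rewrite !inE negbK.
have card_cells : #|{: vec * 'Z_v}| = (m ^ n * v)%N.
  by rewrite card_prod card_ffun !card_ord Zp_cast.
have card_filled : #|filled @: [set: vec * signs]%SET| = (m ^ n * 2 ^ n)%N.
  by rewrite card_imset // cardsT card_prod !card_ffun !card_ord card_bool.
have := cardsC [set t | offset_array t k != None].
by rewrite -starsE filledE card_filled card_cells mulnBr => <-; rewrite addKn.
Qed.

Section SameSymbol.
Variables (a1 a2 : vec) (e1 e2 : signs) (j1 j2 k1 k2 : 'Z_v).
Hypotheses (filled1 : k1 = j1 + offset a1 e1) (filled2 : k2 = j2 + offset a2 e2).
Hypothesis same_symbol : j1 *+ 2 - k1 = j2 *+ 2 - k2.

Lemma same_symbol_row : (a1, j1) = (a2, j2) -> k1 = k2.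
Proof. by case=> _ j_eq; move: same_symbol; rewrite j_eq => /addrI/oppr_inj. Qed.

Lemma same_symbol_column : k1 = k2 -> (a1, j1) = (a2, j2).
Proof.
move=> k_eq; have j_eq : j1 = j2.
  by apply: (Zp_mulrn2_inj v_gt1 v_odd); move: same_symbol; rewrite k_eq => /addIr.
have : offset a1 e1 = offset a2 e2 by apply: (addrI j1); rewrite -filled1 k_eq filled2 j_eq.
by case/offset_inj => -> _; rewrite j_eq.
Qed.

Lemma same_symbol_cross d : k2 = j1 + offset a1 d -> (a1, j1) = (a2, j2).
Proof.
move=> filled12.
have double : offset a2 e2 *+ 2 = offset a1 e1 + offset a1 d.
  have -> : offset a1 d = j2 + offset a2 e2 - j1 by rewrite -filled2 filled12; ring.
  have -> : offset a1 e1 = j1 - (j1 *+ 2 - k1) by rewrite filled1; ring.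
  by rewrite same_symbol filled2; ring.
have [a_eq e_eq _] := offset_double double.
have j_eq : j1 = j2.
  have -> : j1 = (j1 *+ 2 - k1) + (k1 - j1) by ring.
  by rewrite same_symbol filled1 filled2 a_eq e_eq; ring.
by rewrite a_eq j_eq.
Qed.

End SameSymbol.

Lemma offset_array_distinct t1 t2 k1 k2 s :
  (t1, k1) <> (t2, k2) -> offset_array t1 k1 = Some s -> offset_array t2 k2 = Some s ->
  [/\ t1 <> t2, k1 <> k2, offset_array t1 k2 = None & offset_array t2 k1 = None].
Proof.
case: t1 t2 => [a1 j1] [a2 j2] ne.
case/offset_array_some => -[e1 filled1] ->; case/offset_array_some => -[e2 filled2].
move=> /eqP; rewrite eqSS => /eqP/ord_inj same_symbol.
split.
- by move=> rows; apply: ne; rewrite rows (same_symbol_row same_symbol rows).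
- by move=> cols; apply: ne; rewrite cols (same_symbol_column filled1 filled2 same_symbol cols).
- rewrite /offset_array; case: existsP => // -[d /eqP /= filled12]; exfalso; apply: ne.
  have rows := same_symbol_cross filled1 filled2 same_symbol filled12.
  by rewrite rows (same_symbol_row same_symbol rows).
- rewrite /offset_array; case: existsP => // -[d /eqP /= filled21]; exfalso; apply: ne.
  have rows := same_symbol_cross filled2 filled1 (esym same_symbol) filled21.
  by rewrite rows (same_symbol_row (esym same_symbol) rows).
Qed.

Hypothesis m_gt0 : (0 < m)%N.

Lemma offset_array_symbols s : (1 <= s <= v)%N -> exists t k, offset_array t k = Some s.
Proof.
move=> /andP[s_gt0 s_le_v].
pose a : vec := [ffun => Ordinal m_gt0]; pose e : signs := [ffun => true].
pose w : 'Z_v := s.-1%:R; pose o := offset a e.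
exists (a, w + o), (w + o + o); rewrite offset_array_filled.
have -> : (w + o) *+ 2 - (w + o + o) = w by ring.
by rewrite /w val_Zp_nat // modn_small ?prednK.
Qed.

Lemma offset_array_is_PDA : is_PDA_on (m ^ n * (v - 2 ^ n)) v offset_array.
Proof.
split; last split; last split.
- exact: offset_array_range.
- exact: card_offset_array_stars.
- exact: offset_array_symbols.
- exact: offset_array_distinct.
Qed.

End OffsetArray.

Lemma exists_PDA n m v : (0 < m)%N -> (1 < v)%N -> odd v -> ((2 * m + 1) ^ n <= v)%N ->
  exists P : 'I_(m ^ n * v) -> 'I_v -> option nat,
    is_PDA v (m ^ n * v) (m ^ n * (v - 2 ^ n)) v P.
Proof.
move=> m_gt0 v_gt1 v_odd radix_le_v.
have card_cells : #|{: {ffun 'I_n -> 'I_m} * 'Z_v}| = (m ^ n * v)%N.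
  by rewrite card_prod card_ffun !card_ord Zp_cast.
pose row (r : 'I_(m ^ n * v)) := enum_val (cast_ord (esym card_cells) r).
pose col (k : 'I_v) : 'Z_v := cast_ord (esym (Zp_cast v_gt1)) k.
exists (fun r k => offset_array (row r) (col k)).
apply: is_PDA_on_bij (offset_array_is_PDA v_gt1 v_odd radix_le_v m_gt0).
- exists (fun t => cast_ord card_cells (enum_rank t)) => [r | t].
    by rewrite /row enum_valK cast_ordKV.
  by rewrite /row cast_ordK enum_rankK.
- by exists (cast_ord (Zp_cast v_gt1)) => k; rewrite /col (cast_ordK, cast_ordKV).
Qed.

Lemma powR_invn_exprn (R : realType) (x : R) n : 0 <= x -> (0 < n)%N ->
  (x `^ (n%:R)^-1) ^+ n = x.
Proof.
move=> x_ge0 n_gt0; rewrite -powR_mulrn ?powR_ge0 // -powRrM mulVf ?powRr1 //.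
by rewrite pnatr_eq0 -lt0n.
Qed.

Lemma floor_half_pred_bounds (R : archiFieldType) (q : R) (m : nat) :
  3 <= q -> Num.floor ((q - 1) / 2) = m%:Z -> (0 < m)%N /\ (2 * m + 1)%:R <= q.
Proof.
move=> q_ge3 floor_eq; have := floor_itv ((q - 1) / 2); rewrite floor_eq => /andP[lo hi].
split; last by move: lo; rewrite ler_pdivlMr // natrD natrM; lra.
have : (1 : R) < (m%:Z + 1)%:~R by apply: le_lt_trans hi; rewrite ler_pdivlMr //; lra.
by rewrite -[1 : R]/((1%:Z)%:~R) ltr_int; lia.
Qed.

Theorem corollary1 (R : realType) (n v : nat) (q : R) (m : nat) :
  (0 < n)%N -> odd v -> (0 < v)%N ->
  q = (v%:R : R) `^ (n%:R)^-1 ->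
  3 <= q ->
  Num.floor ((q - 1) / 2) = (m : int) ->
  exists P : 'I_(m ^ n * v)%N -> 'I_v -> option nat,
    is_PDA v (m ^ n * v)%N (m ^ n * (v - 2 ^ n))%N v P /\
    ((m ^ n * (v - 2 ^ n))%N%:R / (m ^ n * v)%N%:R = 1 - (2 / q) ^+ n :> R) /\
    ((v%:R / (m ^ n * v)%N%:R) = (m%:R : R) ^- n).
Proof.
move=> n_gt0 v_odd v_gt0 q_def q_ge3 floor_eq.
have qn : q ^+ n = v%:R by rewrite q_def powR_invn_exprn.
have [m_gt0 radix_le_q] := floor_half_pred_bounds q_ge3 floor_eq.
have radix_le_v : ((2 * m + 1) ^ n <= v)%N.
  by rewrite -(ler_nat R) natrX -qn lerXn2r // ?nnegrE //; lra.
have two_pow_le_v : (2 ^ n <= v)%N.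
  by apply: leq_trans radix_le_v; rewrite leq_exp2r //; lia.
have v_gt1 : (1 < v)%N.
  by apply: leq_trans radix_le_v; rewrite -[1%N](exp1n n) ltn_exp2r //; lia.
have [P P_PDA] := exists_PDA m_gt0 v_gt1 v_odd radix_le_v.
have mn_neq0 : (m%:R : R) ^+ n != 0 by rewrite expf_eq0 pnatr_eq0; lia.
have v_neq0 : (v%:R : R) != 0 by rewrite pnatr_eq0; lia.
exists P; split; [done | split].
- rewrite expr_div_n qn !natrM natrB // !natrX; field; exact/andP.
- by rewrite natrM natrX; field; apply/andP.
Qed.
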